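(* Let $p$ be an odd prime and $r$ a positive integer. Then $$ \sum_{k=0}^{(p^r+1)/2}\frac{(4k-1)^3}{256^k(2k-1)^4}\binom{2k}{k}^4\equiv 3p^{4r} \pmod{p^{4r+1}}, \qquad \sum_{k=0}^{p^r-1}\frac{(4k-1)^3}{256^k(2k-1)^4}\binom{2k}{k}^4\equiv 3p^{4r} \pmod{p^{4r+1}}. $$
   Context: Congruences between rational numbers modulo a power of $p$ are understood in the ring of $p$-adic integers (i.e. the difference has $p$-adic valuation at least the exponent indicated). *)

From mathcomp Require Import all_boot all_order all_algebra.
Set Implicit Arguments. Unset Strict Implicit. Unset Printing Implicit Defensive.
Import Order.TTheory GRing.Theory Num.Theory.
Local Open Scope ring_scope.

(* Congruence of rationals modulo p^n in Z_p: the difference x - y has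
   p-adic valuation >= n, i.e. in lowest terms its numerator is divisible by
   p^n and its denominator is prime to p (for p prime). *)
Definition rat_cong_mod (p n : nat) (x y : rat) : Prop :=
  ((p ^ n)%:Z %| numq (x - y))%Z /\ ~~ ((p%:Z %| denq (x - y))%Z).

Definition term (k : nat) : rat :=
  ((4 * k%:Z - 1) ^+ 3)%:~R / ((256 ^ k)%:R * ((2 * k%:Z - 1) ^+ 4)%:~R)
  * ('C(2 * k, k))%:R ^+ 4.

From mathcomp Require Import all_boot all_order all_algebra finfield.
From mathcomp Require Import ring zify.
Import Order.TTheory GRing.Theory Num.Theory.
Local Open Scope ring_scope.

(* The series is WZ-telescoping: its partial sums have the
   closed form
       \sum_(k <= n) term k = C(2n,n)^4 (8n^2 + 4n - 1) / 256^n,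
   which is checked by induction with one use of C(2n+2,n+1) =
   2(2n+1)/(n+1) C(2n,n).  Put N = p^r.  At both upper limits n = (N+1)/2
   and n = N-1 one factor of the central binomial coefficient carries an
   exact factor N, so the closed form is N^4 times a p-integral rational
   a/b; it therefore suffices to check a = 3b in 'F_p.  That check uses
   only the facts C(N-1,i) = (-1)^i, C(N+a,i) = C(a,i) (i < N) and
   2^(N-1) = 1 in 'F_p. *)

Definition quad (n : nat) : int := 8 * n%:Z ^+ 2 + 4 * n%:Z - 1.

Lemma quad_cast (R : pzRingType) n :
  (quad n)%:~R = 8 * n%:R ^+ 2 + 4 * n%:R - 1 :> R.
Proof. by rewrite /quad rmorphB rmorphD !rmorphM. Qed.

Definition closed_sum (n : nat) : rat :=
  'C(2 * n, n)%:R ^+ 4 * (quad n)%:~R / (256 ^ n)%:R.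

Lemma bin_odd_sym n : 'C((2 * n).+1, n.+1) = 'C((2 * n).+1, n).
Proof.
rewrite -(bin_sub (_ : n <= (2 * n).+1)%N); last by lia.
by congr binomial; lia.
Qed.

Lemma odd_central_bin n :
  (n.+1 * 'C((2 * n).+1, n) = (2 * n).+1 * 'C(2 * n, n))%N.
Proof. by rewrite -bin_odd_sym -mul_bin_diag. Qed.

Lemma central_binS n :
  (n.+1 * 'C(2 * n.+1, n.+1) = 2 * (2 * n).+1 * 'C(2 * n, n))%N.
Proof.
have -> : (2 * n.+1 = (2 * n).+2)%N by lia.
rewrite binS bin_odd_sym addnn -mul2n mulnCA odd_central_bin; lia.
Qed.

Lemma natr_odd (R : pzSemiRingType) n : (2 * n).+1%:R = 2 * n%:R + 1 :> R.
Proof. by rewrite -natr1 natrM. Qed.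

Lemma central_binS_ratio (F : numFieldType) n :
  'C(2 * n.+1, n.+1)%:R = 2 * (2 * n%:R + 1) * 'C(2 * n, n)%:R / n.+1%:R :> F.
Proof.
apply: (mulIf (_ : n.+1%:R != 0)); first by rewrite pnatr_eq0.
by rewrite mulfVK ?pnatr_eq0 // mulrC -[LHS]natrM central_binS !natrM natr_odd.
Qed.

Lemma closed_sumS n : closed_sum n.+1 = closed_sum n + term n.+1.
Proof.
have hn : n.+1%:R != 0 :> rat by rewrite pnatr_eq0.
have h2n : 2 * n%:R + 1 != 0 :> rat by rewrite -natr_odd pnatr_eq0.
have h256 : 256 ^+ n != 0 :> rat by rewrite expf_neq0.
rewrite /closed_sum /term /quad central_binS_ratio !natrX [256 ^+ n.+1]exprS.
field; rewrite nat1r hn h256 andbT.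
by have -> : 2 * n.+1%:R - 1 = 2 * n%:R + 1 :> rat by rewrite -natr1; ring.
Qed.

Lemma sum_term_closed n : \sum_(0 <= k < n.+1) term k = closed_sum n.
Proof.
elim: n => [|n IH]; first by rewrite big_nat1 /term /closed_sum.
by rewrite big_nat_recr //= IH closed_sumS.
Qed.

Section ModPrime.
Variable p : nat.
Hypothesis p_pr : prime p.

Lemma natr_Fp_eq0 n : ((n%:R : 'F_p) == 0) = (p %| n)%N.
Proof. by rewrite (dvdn_pcharf (pchar_Fp p_pr)). Qed.

Lemma intr_Fp_eq0 (z : int) : ((z%:~R : 'F_p) == 0) = (p %| `|z|)%N.
Proof.
case: z => n; first by rewrite /= -natr_Fp_eq0.
by rewrite NegzE /= rmorphN /= oppr_eq0 -natr_Fp_eq0.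
Qed.

Lemma two_Fp_neq0 : odd p -> (2 : 'F_p) != 0.
Proof.
move=> p_odd; rewrite natr_Fp_eq0.
apply/negP => /(dvdn_leq (isT : (0 < 2)%N)) p_le2.
have p2 : p = 2%N by have := prime_gt1 p_pr; lia.
by rewrite p2 in p_odd.
Qed.

Variable r : nat.
Local Notation N := (p ^ r)%N.

Lemma prime_power_Fp_eq0 : (0 < r)%N -> (N%:R : 'F_p) = 0.
Proof. by move=> r_gt0; apply/eqP; rewrite natr_Fp_eq0 dvdn_exp. Qed.

Lemma prime_power_dvd_bin k : (0 < k < N)%N -> (p %| 'C(N, k))%N.
Proof.
case/andP=> k_gt0 k_ltN; apply/negPn/negP => pNbin.
have := mul_bin_diag N k.-1; rewrite prednK // => hbin.
have : (N %| k * 'C(N, k))%N by rewrite -hbin dvdn_mulr.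
rewrite Gauss_dvdl; last by rewrite coprimeXl // prime_coprime.
by move/dvdn_leq => /(_ k_gt0); rewrite leqNgt k_ltN.
Qed.

Lemma bin_shift_Fp a i : (i < N)%N -> ('C(N + a, i)%:R : 'F_p) = 'C(a, i)%:R.
Proof.
elim: a i => [|a IH] [|i] i_ltN; rewrite ?bin0 //.
  by rewrite addn0 bin0n; apply/eqP; rewrite natr_Fp_eq0 prime_power_dvd_bin.
by rewrite addnS !binS !natrD !IH // ltnW.
Qed.

Lemma bin_pred_Fp i : (i < N)%N -> ('C(N.-1, i)%:R : 'F_p) = (-1) ^+ i.
Proof.
have N_gt0 : (0 < N)%N by rewrite expn_gt0 prime_gt0.
elim: i => [|i IH] i_ltN; first by rewrite bin0.
have : ('C(N, i.+1)%:R : 'F_p) = 0.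
  by apply/eqP; rewrite natr_Fp_eq0 prime_power_dvd_bin.
rewrite -(prednK N_gt0) binS natrD IH ?(ltnW i_ltN) // exprS.
by move/eqP; rewrite addr_eq0 => /eqP ->; rewrite mulN1r.
Qed.

Lemma expr_prime_power_Fp (x : 'F_p) : x ^+ N = x.
Proof.
elim: r => [|s IH]; first by rewrite expr1.
by rewrite expnSr exprM IH; have := expf_card x; rewrite card_Fp.
Qed.

Lemma two_pow_pred_Fp : odd p -> (2 : 'F_p) ^+ N.-1 = 1.
Proof.
move=> p_odd; apply: (mulIf (two_Fp_neq0 p_odd)).
by rewrite -exprSr prednK ?expn_gt0 ?prime_gt0 // expr_prime_power_Fp mul1r.
Qed.

End ModPrime.

Lemma rat_cong_mod_frac (p e : nat) (A B : int) (x y : rat) :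
  prime p -> (p ^ e %| `|A|)%N -> ~~ (p %| `|B|)%N ->
  x - y = A%:~R / B%:~R -> rat_cong_mod p e x y.
Proof.
move=> p_pr pA pNB x_y; rewrite /rat_cong_mod x_y.
have B_neq0 : B != 0 by apply: contra pNB => /eqP ->; rewrite dvdn0.
set q := A%:~R / B%:~R : rat.
have q_cross : (`|numq q| * `|B| = `|A| * `|denq q|)%N.
  rewrite -!abszM; congr absz; apply: (@intr_inj rat).
  by rewrite !rmorphM /= numqE /q mulrAC divfK // intr_eq0.
have q_cop := coprime_num_den q.
split.
- have : (p ^ e %| `|numq q| * `|B|)%N by rewrite q_cross dvdn_mulr.
  by rewrite Gauss_dvdl // coprimeXl // prime_coprime.
- apply: contra pNB => p_den.
  have : (`|denq q| %| `|numq q| * `|B|)%N by rewrite q_cross dvdn_mull.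
  by rewrite Gauss_dvdr 1?coprime_sym // => /(dvdn_trans p_den).
Qed.

Lemma rat_cong_mod_scaled (p m c : nat) (a : int) (b : nat) :
  prime p -> ~~ (p %| b)%N -> (a%:~R : 'F_p) = c%:R * b%:R ->
  rat_cong_mod p m.+1 ((p ^ m)%:R * (a%:~R / b%:R)) (c%:R * (p ^ m)%:R).
Proof.
move=> p_pr pNb a_cb.
have b_neq0 : b%:R != 0 :> rat by apply: contra pNb; rewrite pnatr_eq0 => /eqP ->.
apply: (@rat_cong_mod_frac p m.+1 ((p ^ m)%:Z * (a - c%:Z * b%:Z)) b) => //.
- rewrite abszM absz_nat expnSr dvdn_pmul2l ?expn_gt0 ?prime_gt0 //.
  by rewrite -intr_Fp_eq0 // rmorphB rmorphM /= a_cb subrr.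
- by field.
Qed.

(* Closed form at n = j + 1: the factor 2j+1 of C(2j+2,j+1) comes out. *)
Lemma closed_sum_succ j :
  closed_sum j.+1 = ((2 * j).+1 ^ 4)%:R *
    ((16 * 'C(2 * j, j)%:Z ^+ 4 * quad j.+1)%:~R / (j.+1 ^ 4 * 256 ^ j.+1)%:R).
Proof.
have hj : j.+1%:R != 0 :> rat by rewrite pnatr_eq0.
have h256 : 256 ^+ j.+1 != 0 :> rat by rewrite expf_neq0.
rewrite /closed_sum central_binS_ratio !natrM !natrX natr_odd.
by field; rewrite nat1r hj h256.
Qed.

(* Closed form at any n: the factor n+1 of C(2n+1,n) comes out. *)
Lemma closed_sum_odd n :
  closed_sum n = (n.+1 ^ 4)%:R *
    (('C((2 * n).+1, n)%:Z ^+ 4 * quad n)%:~R / ((2 * n).+1 ^ 4 * 256 ^ n)%:R).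
Proof.
have h2n : (2 * n).+1%:R != 0 :> rat by rewrite pnatr_eq0.
have h256 : 256 ^+ n != 0 :> rat by rewrite expf_neq0.
have hC : 'C(2 * n, n)%:R = n.+1%:R * 'C((2 * n).+1, n)%:R / (2 * n).+1%:R :> rat.
  by apply: (mulIf h2n); rewrite mulfVK // -!natrM mulnC odd_central_bin mulnC.
rewrite /closed_sum hC !natrM !natrX natr_odd.
by field; rewrite h256 /= -natr_odd pnatr_eq0.
Qed.

Lemma cong_at_half p r : prime p -> odd p -> (0 < r)%N ->
  rat_cong_mod p (4 * r).+1 (closed_sum (p ^ r)%N.+1./2) (3 * (p ^ (4 * r))%:R).
Proof.
move=> p_pr p_odd r_gt0.
have N_odd : odd (p ^ r) by rewrite oddX p_odd orbT.
set j := (p ^ r)%N./2.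
have N_j : (p ^ r = (2 * j).+1)%N.
  by rewrite -{1}(odd_double_half (p ^ r)) N_odd add1n -mul2n.
have -> : ((p ^ r).+1./2 = j.+1)%N by rewrite N_j mul2n -doubleS doubleK.
have h2 : (2 : 'F_p) != 0 by exact: two_Fp_neq0.
have hj : (j.+1%:R : 'F_p) = 2^-1.
  apply: (mulIf h2); rewrite mulVf //.
  have -> : j.+1%:R * 2 = (2 * j).+1%:R + 1 :> 'F_p by rewrite natr_odd -natr1; ring.
  by rewrite -N_j prime_power_Fp_eq0 // add0r.
have hW : ('C(2 * j, j)%:R : 'F_p) ^+ 4 = 1.
  have -> : (2 * j = (p ^ r).-1)%N by rewrite N_j.
  rewrite bin_pred_Fp //; last by rewrite N_j; lia.
  by rewrite -exprM mulnC exprM (_ : (-1) ^+ 4 = 1 :> 'F_p) ?expr1n //; ring.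
have h256 : ((256 ^ j.+1)%:R : 'F_p) = 2 ^+ 8.
  have h2j : (2 : 'F_p) ^+ (2 * j) = 1.
    by have := two_pow_pred_Fp p p_pr r p_odd; rewrite N_j.
  rewrite natrX (_ : 256%:R = (2 : 'F_p) ^+ 8); last by ring.
  rewrite -exprM (_ : (8 * j.+1 = 2 * j * 4 + 8)%N); last by lia.
  by rewrite exprD exprM h2j expr1n mul1r.
have hb : ((j.+1 ^ 4 * 256 ^ j.+1)%:R : 'F_p) = 2 ^+ 4.
  by rewrite natrM natrX hj h256; field.
rewrite closed_sum_succ -N_j -expnM (mulnC r 4).
apply: rat_cong_mod_scaled => //.
- by rewrite -natr_Fp_eq0 // hb expf_neq0.
- by rewrite hb rmorphM rmorphM rmorphXn /= hW quad_cast hj; field.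
Qed.

Lemma cong_at_pred p r : prime p -> odd p -> (0 < r)%N ->
  rat_cong_mod p (4 * r).+1 (closed_sum (p ^ r)%N.-1) (3 * (p ^ (4 * r))%:R).
Proof.
move=> p_pr p_odd r_gt0.
set n := (p ^ r)%N.-1.
have N_n : (p ^ r = n.+1)%N by rewrite prednK // expn_gt0 prime_gt0.
have hn : (n%:R : 'F_p) = -1.
  by apply/eqP; rewrite -subr_eq0 opprK natr1 -N_n prime_power_Fp_eq0.
have hB : ('C((2 * n).+1, n)%:R : 'F_p) ^+ 4 = 1.
  have -> : ((2 * n).+1 = p ^ r + n)%N by rewrite N_n; lia.
  by rewrite bin_shift_Fp // ?binn ?expr1n // N_n.
have h256 : ((256 ^ n)%:R : 'F_p) = 1.
  rewrite natrX (_ : 256%:R = (2 : 'F_p) ^+ 8); last by ring.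
  by rewrite -exprM mulnC exprM two_pow_pred_Fp // expr1n.
have hb : (((2 * n).+1 ^ 4 * 256 ^ n)%:R : 'F_p) = 1.
  by rewrite natrM natrX natr_odd hn h256; ring.
rewrite closed_sum_odd -N_n -expnM (mulnC r 4).
apply: rat_cong_mod_scaled => //.
- by rewrite -natr_Fp_eq0 // hb oner_neq0.
- by rewrite hb rmorphM rmorphXn /= hB quad_cast hn; ring.
Qed.

Theorem mainTheorem3 (p r : nat) :
  prime p -> odd p -> (0 < r)%N ->
  rat_cong_mod p (4 * r).+1
    (\sum_(0 <= k < ((p ^ r).+1)./2.+1) term k) (3 * ((p ^ (4 * r))%:R)) /\
  rat_cong_mod p (4 * r).+1
    (\sum_(0 <= k < p ^ r) term k) (3 * ((p ^ (4 * r))%:R)).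
Proof.
move=> p_pr p_odd r_gt0.
have N_gt0 : (0 < p ^ r)%N by rewrite expn_gt0 prime_gt0.
have -> : \sum_(0 <= k < p ^ r) term k = closed_sum (p ^ r).-1.
  by rewrite -sum_term_closed prednK.
rewrite sum_term_closed.
by split; [exact: cong_at_half | exact: cong_at_pred].
Qed.
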